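(* Let $G$ be a finite graph with maximum degree $\Delta$, with edges ordered $e_1,\ldots,e_m$, let $\gamma>1$ be real, $K=\lceil(2+\gamma)(\Delta-1)\rceil$, and $t$ a positive integer. Let $F\in\{1,\ldots,\lceil\gamma(\Delta-1)\rceil\}^t$ be an input for which, when the Procedure described in the context is run, some edge is still uncolored after step $t$, and let $R=(R_1,\ldots,R_t)$ be the record produced. Let $R^\circ$ be the word over $\{0,1\}$ obtained by concatenating, for $i=1,\ldots,t$, the word $0$ if $R_i$ is empty and the word $0\,1^{2k-2}$ if $R_i=(k,\ell)$. Then $R^\circ$ is a partial Dyck word with $t$ letters $0$ and $t-r$ letters $1$, where $r$ is the number of colored edges after step $t$. Moreover, all descents in $R^\circ$ have even length, and if every cycle of $G$ has length at least $2\ell+1$ for some integer $\ell\ge 1$, then all descents in $R^\circ$ have length at least $\max(4,2\ell)$.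
   Context: Procedure. A partial edge-coloring assigns to some edges a color in $\{1,\ldots,K\}$; initially all edges are uncolored. Fix, for every edge $e$ and every $k\ge 3$, an enumeration (e.g. lexicographic) of the cycles of length $2k$ of $G$ containing $e$. At step $i=1,2,\ldots,t$: if no edge is uncolored, stop. Otherwise let $e_j=uv$ be the uncolored edge of smallest index. Let $S'$ be the set of colors appearing on edges $xy\neq uv$ such that (1) $x=u$ or $x=v$, or (2) edges $ux$ and $vy$ exist and have the same color; let $S=\{1,\ldots,K\}\setminus S'$. Color $e_j$ with the $F_i$-th smallest element of $S$. If this creates a cycle colored with only two colors (it has length $2k\ge 6$), choose one such cycle $C$ by a fixed deterministic rule, write it as $e_{i_1},e_{i_2},\ldots,e_{i_{2k}},e_{i_1}$ (consecutive edges) with $e_{i_1}=e_j$ and $i_2<i_{2k}$, uncolor all edges of $C$ except $e_{i_2}$ and $e_{i_3}$, and set $R_i=(k,\ell)$ where $\ell$ is the index of $C$ in the fixed enumeration of cycles of length $2k$ containing $e_j$. Otherwise $R_i$ is empty. A partial Dyck word is a word over $\{0,1\}$ in which every prefix contains at least as many $0$'s as $1$'s. A descent is a maximal block of consecutive $1$'s. *)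

From mathcomp Require Import all_boot all_order all_algebra.
Set Implicit Arguments. Unset Strict Implicit. Unset Printing Implicit Defensive.
Import Order.TTheory GRing.Theory Num.Theory.

(* Graph: vertices T, edges e_0..e_{m-1} (paper: e_1..e_m), edge i has endpoints ends i. *)
Definition joins (T : finType) (m : nat) (ends : 'I_m -> T * T) (i : 'I_m) (a b : T) : bool :=
  (ends i == (a, b)) || (ends i == (b, a)).

Definition incident (T : finType) (m : nat) (ends : 'I_m -> T * T) (i : 'I_m) (v : T) : bool :=
  ((ends i).1 == v) || ((ends i).2 == v).

Definition simple_graph (T : finType) (m : nat) (ends : 'I_m -> T * T) : Prop :=
  (forall i, (ends i).1 != (ends i).2) /\
  (forall i i', joins ends i (ends i').1 (ends i').2 -> i = i').

Definition maxdeg (T : finType) (m : nat) (ends : 'I_m -> T * T) : nat :=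
  \max_(v : T) #|[set i | incident ends i v]|.

Definition is_cycle (T : finType) (m : nat) (ends : 'I_m -> T * T) (cs : seq 'I_m) : Prop :=
  3 <= size cs /\ uniq cs /\
  exists vs : seq T, size vs = size cs /\ uniq vs /\
    forall (d : 'I_m) (dv : T) (i : nat), i < size cs ->
      joins ends (nth d cs i) (nth dv vs i) (nth dv vs (i.+1 %% size cs)).

Definition normal_cycle (T : finType) (m : nat) (ends : 'I_m -> T * T) (j : 'I_m)
  (cs : seq 'I_m) : Prop :=
  is_cycle ends cs /\ head j cs = j /\ (nth j cs 1 < nth j cs (size cs).-1)%N.

(* colorings: c i = 0 means uncolored, colors are 1..K *)
Definition bicycle (T : finType) (m : nat) (ends : 'I_m -> T * T) (c : 'I_m -> nat)
  (j : 'I_m) (cs : seq 'I_m) : Prop :=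
  normal_cycle ends j cs /\ all (fun i => c i != 0) cs /\ size (undup (map c cs)) <= 2.

Definition rule_spec (T : finType) (m : nat) (ends : 'I_m -> T * T)
  (rule : ('I_m -> nat) -> 'I_m -> option (seq 'I_m)) : Prop :=
  forall c j, match rule c j with
              | Some cs => bicycle ends c j cs
              | None => forall cs, ~ bicycle ends c j cs
              end.

Definition enum_spec (T : finType) (m : nat) (ends : 'I_m -> T * T)
  (enumc : 'I_m -> nat -> seq (seq 'I_m)) : Prop :=
  forall j k, uniq (enumc j k) /\
    forall cs, cs \in enumc j k <-> (normal_cycle ends j cs /\ size cs = (2 * k)%N).

Definition forbidden (T : finType) (m : nat) (ends : 'I_m -> T * T) (c : 'I_m -> nat)
  (j : 'I_m) (a : nat) : bool :=
  [exists i : 'I_m, [&& i != j, a != 0, c i == a &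
    [exists x : T, exists y : T, joins ends i x y &&
      [|| x == (ends j).1, x == (ends j).2 |
       [exists p : 'I_m, exists q : 'I_m,
          [&& joins ends p (ends j).1 x, joins ends q (ends j).2 y,
              c p != 0 & c p == c q]]]]]].

Definition palette (T : finType) (m : nat) (ends : 'I_m -> T * T) (K : nat)
  (c : 'I_m -> nat) (j : 'I_m) : seq nat :=
  [seq a <- iota 1 K | ~~ forbidden ends c j a].

Definition step (T : finType) (m : nat) (ends : 'I_m -> T * T)
  (rule : ('I_m -> nat) -> 'I_m -> option (seq 'I_m))
  (enumc : 'I_m -> nat -> seq (seq 'I_m)) (K : nat)
  (c : 'I_m -> nat) (f : nat) : ('I_m -> nat) * option (nat * nat) :=
  match [pick j | (c j == 0) && [forall i : 'I_m, (i < j)%N ==> (c i != 0)]] with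
  | None => (c, None)
  | Some j =>
      let a := nth 0 (palette ends K c j) f.-1 in
      let c1 := fun i => if i == j then a else c i in
      match rule c1 j with
      | None => (c1, None)
      | Some cs =>
          let k := (size cs)./2 in
          ((fun i => if [&& i \in cs, i != nth j cs 1 & i != nth j cs 2] then 0 else c1 i),
           Some (k, (index cs (enumc j k)).+1))
      end
  end.

Fixpoint run_from (T : finType) (m : nat) (ends : 'I_m -> T * T)
  (rule : ('I_m -> nat) -> 'I_m -> option (seq 'I_m))
  (enumc : 'I_m -> nat -> seq (seq 'I_m)) (K : nat)
  (c : 'I_m -> nat) (F : seq nat) : ('I_m -> nat) * seq (option (nat * nat)) :=
  match F with
  | [::] => (c, [::])
  | f :: F' =>
      let sr := step ends rule enumc K c f in
      let rest := run_from ends rule enumc K sr.1 F' in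
      (rest.1, sr.2 :: rest.2)
  end.

Definition procedure (T : finType) (m : nat) (ends : 'I_m -> T * T)
  (rule : ('I_m -> nat) -> 'I_m -> option (seq 'I_m))
  (enumc : 'I_m -> nat -> seq (seq 'I_m)) (K : nat) (F : seq nat) :=
  run_from ends rule enumc K (fun _ => 0) F.

Definition ceiln (R : archiRealFieldType) (x : R) : nat := absz (Num.ceil x).

Definition Kcol (R : archiRealFieldType) (gamma : R) (D : nat) : nat :=
  ceiln ((2%:R + gamma) * (D.-1)%:R).
Definition Fbound (R : archiRealFieldType) (gamma : R) (D : nat) : nat :=
  ceiln (gamma * (D.-1)%:R).

Definition Rcirc (R : seq (option (nat * nat))) : seq nat :=
  flatten [seq if r is Some (k, _) then 0 :: nseq (2 * k - 2) 1 else [:: 0] | r <- R].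

Definition partial_dyck (w : seq nat) : Prop :=
  all (fun x => (x == 0) || (x == 1)) w /\
  forall n, count_mem 1 (take n w) <= count_mem 0 (take n w).

(* positions a..b-1 form a descent (maximal block of 1's); its length is b - a *)
Definition descent (w : seq nat) (a b : nat) : bool :=
  [&& a < b, b <= size w, all (fun i => nth 0 w i == 1) (iota a (b - a)),
      (a == 0) || (nth 0 w a.-1 != 1) &
      (b == size w) || (nth 0 w b != 1)].

From mathcomp Require Import all_boot all_order all_algebra.
Import Order.TTheory GRing.Theory Num.Theory.
From mathcomp Require Import zify.

(* Since some edge is still uncoloured after step t, every step colours one edge, and a step
   recording (k, l) then uncolours the 2k - 2 edges of a two-coloured 2k-cycle other than
   e_{i_2}, e_{i_3}. Hence after any prefix of the record the number of coloured edges is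
   (#0s) - (#1s) >= 0, so R° is a partial Dyck word, and at the end it equals t - #1s. The
   descents of R° are exactly its blocks 1^{2k-2}. A properly coloured cycle on two colours
   alternates, so it is even; its length is at least the girth; and it is not a square,
   because clause (2) of S' forbids the new colour of e_j from closing a two-coloured
   4-cycle. A colour can always be chosen since
   |S'| <= 2 (Delta - 1) = K - ceil(gamma (Delta - 1)). *)

Set Implicit Arguments. Unset Strict Implicit. Unset Printing Implicit Defensive.

Definition block_word (ns : seq nat) : seq nat := flatten [seq 0 :: nseq n 1 | n <- ns].

Definition record_ones (r : option (nat * nat)) : nat :=
  if r is Some (k, _) then 2 * k - 2 else 0.

Lemma Rcirc_block_word R : Rcirc R = block_word (map record_ones R).
Proof. by rewrite /Rcirc /block_word -map_comp; congr flatten; apply: eq_map => -[[]|]. Qed.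

Lemma block_word_cons n ns : block_word (n :: ns) = 0 :: nseq n 1 ++ block_word ns.
Proof. by []. Qed.

Lemma nth0_block_word ns : nth 0 (block_word ns) 0 != 1.
Proof. by case: ns. Qed.

Lemma all01_block_word ns : all (fun x => (x == 0) || (x == 1)) (block_word ns).
Proof. by elim: ns => //= n ns IH; rewrite all_cat IH all_nseq orbT. Qed.

Lemma count0_block_word ns : count_mem 0 (block_word ns) = size ns.
Proof. by elim: ns => //= n ns IH; rewrite count_cat count_nseq IH mul0n. Qed.

Lemma count1_block_word ns : count_mem 1 (block_word ns) = sumn ns.
Proof. by elim: ns => //= n ns IH; rewrite count_cat count_nseq IH mul1n. Qed.

Lemma block_word_prefix ns c : (forall k, sumn (take k ns) <= k + c) ->
  forall p, count_mem 1 (take p (block_word ns)) <= count_mem 0 (take p (block_word ns)) + c.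
Proof.
elim: ns c => [|n ns IH] c Hns p; first by rewrite take_oversize.
have Hn : n <= c.+1 by have := Hns 1; rewrite /= take0 /=; lia.
have Hrest k : sumn (take k ns) <= k + (c.+1 - n) by have := Hns k.+1; rewrite /=; lia.
rewrite block_word_cons -cat_cons take_cat /= size_nseq.
case: p => [|p] //=; case: ltnP => Hp.
  by rewrite take_nseq /= ?count_nseq /=; lia.
rewrite /= !count_cat !count_nseq /= subSS.
have := IH _ Hrest (p - n); set x := count_mem 1 _; set y := count_mem 0 _; lia.
Qed.

Lemma descent_cat_shift s u a b : size s < a ->
  descent (s ++ u) a b -> descent u (a - size s) (b - size s).
Proof.
move=> Ha /and5P [Hab Hb /allP Hones Hl Hr].
have Hnth i : size s <= i -> nth 0 (s ++ u) i = nth 0 u (i - size s).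
  by move=> Hi; rewrite nth_cat ltnNge Hi.
rewrite size_cat in Hb Hr; apply/and5P; split; [lia | lia | | |].
- apply/allP => i; rewrite mem_iota => Hi.
  by rewrite -(addnK (size s) i) -Hnth ?Hones ?mem_iota; lia.
- by rewrite (_ : (a - size s).-1 = a.-1 - size s) -?Hnth; lia.
- by rewrite -Hnth; lia.
Qed.

Lemma descent_first_block n u a b : nth 0 u 0 != 1 -> a <= n.+1 ->
  descent (0 :: nseq n 1 ++ u) a b -> b - a = n.
Proof.
move=> Hu Han /and5P [Hab Hb /allP Hones Hl Hr].
have one i : a <= i < b -> nth 0 (0 :: nseq n 1 ++ u) i = 1.
  by move=> Hi; apply/eqP/Hones; rewrite mem_iota; lia.
clear Hones; have in_block i : 0 < i <= n -> nth 0 (0 :: nseq n 1 ++ u) i = 1.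
  by case: i => // i Hi; rewrite /= nth_cat size_nseq nth_nseq; case: ltnP; lia.
have at_end : nth 0 (0 :: nseq n 1 ++ u) n.+1 = nth 0 u 0.
  by rewrite /= nth_cat size_nseq ltnn subnn.
have Ha0 : 0 < a by case: a Han Hab Hl one => // _ Hab _ /(_ 0); rewrite /=; lia.
have Ha : a = 1.
  have Han' : a != n.+1 by apply: contraTneq Hu => Ea; rewrite -at_end -Ea one ?leqnn.
  case: (ltnP 1 a) => // H1; last by lia.
  by move: Hl; rewrite eqn0Ngt Ha0 /= in_block //; lia.
subst a; have Hb1 : b <= n.+1.
  by case: (leqP b n.+1) => // Hbn; move: Hu; rewrite -at_end one //; lia.
suff : n.+1 <= b by lia.
case/orP: Hr => [/eqP|]; first by rewrite /= size_cat size_nseq; lia.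
by case: (ltnP b n.+1) => // Hbn; rewrite in_block //; lia.
Qed.

Lemma descent_block_word ns a b : descent (block_word ns) a b -> b - a \in ns.
Proof.
elim: ns a b => [|n ns IH] a b Hd; first by case/and5P: Hd => /=; lia.
rewrite inE; case: (leqP a n.+1) => Han.
  by rewrite (descent_first_block (nth0_block_word ns) Han Hd) eqxx.
have Hab : a < b by case/and5P: Hd.
move: Hd; rewrite block_word_cons -cat_cons => /descent_cat_shift /=.
rewrite size_nseq => /(_ Han) /IH Hin.
by rewrite (_ : b - a = b - n.+1 - (a - n.+1)) ?Hin ?orbT //; lia.
Qed.

Lemma descent_Rcirc Rs a b : descent (Rcirc Rs) a b ->
  exists2 kl, Some kl \in Rs & b - a = 2 * kl.1 - 2.
Proof.
move=> Hd; have Hab : a < b by case/and5P: Hd.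
rewrite Rcirc_block_word in Hd.
by case/mapP: (descent_block_word Hd) => -[[k l]|] Hin /= E; [exists (k, l) | lia].
Qed.

Lemma size_le_card_cofunctional (X : eqType) (Y : finType) (s : seq X) (E : {set Y})
    (r : X -> Y -> bool) :
  uniq s -> {in s, forall a, exists2 e, e \in E & r a e} ->
  (forall a a' e, r a e -> r a' e -> a = a') -> size s <= #|E|.
Proof.
move=> Hs Hex Hfun; pose f a := [pick e in E | r a e].
have f_some a : a \in s -> exists2 e, e \in E & f a = Some e /\ r a e.
  move=> /Hex [e0 He0 Hr0]; rewrite /f; case: pickP => [e /andP [He Hr]|/(_ e0)].
    by exists e.
  by rewrite He0 Hr0.
have Hsub : {subset map f s <= map Some (enum E)}.
  move=> o /mapP [a /f_some [e He [-> _]] ->].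
  by rewrite mem_map ?mem_enum //; apply: Some_inj.
rewrite -(size_map f) cardE -[size (enum E)](size_map Some); apply: (uniq_leq_size _ Hsub).
rewrite map_inj_in_uniq // => a a' /f_some [e _ [-> Hr]] /f_some [e' _ [-> Hr']] [Ee].
by subst e'; exact: Hfun Hr Hr'.
Qed.

Lemma Kcol_Fbound (R : archiRealFieldType) (gamma : R) D : (1 < gamma)%R ->
  Kcol gamma D = Fbound gamma D + 2 * D.-1.
Proof.
move=> Hg; rewrite /Kcol /Fbound /ceiln.
have -> : ((2%:R + gamma) * D.-1%:R = gamma * D.-1%:R + (2 * D.-1)%:Z%:~R :> R)%R.
  by rewrite -pmulrn mulrDl natrM mulrC addrC.
rewrite ceilDrz ?intr_int // intrKceil.
have : (0 <= Num.ceil (gamma * D.-1%:R))%R.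
  by rewrite ceil_ge0 (lt_le_trans _ (mulr_ge0 (le_trans ler01 (ltW Hg)) (ler0n _ _))) ?oppr_lt0.
by case: (Num.ceil _) => // n _; rewrite -PoszD.
Qed.

Section Graph.
Variables (T : finType) (m : nat) (ends : 'I_m -> T * T).
Hypothesis ends_simple : simple_graph ends.

Lemma joinsP i a b : reflect (ends i = (a, b) \/ ends i = (b, a)) (joins ends i a b).
Proof. by rewrite /joins; apply: (iffP orP) => -[/eqP|/eqP] H; rewrite ?H ?eqxx; auto. Qed.

Lemma joins_sym i a b : joins ends i a b = joins ends i b a.
Proof. by rewrite /joins orbC. Qed.

Lemma joins_incidentl i a b : joins ends i a b -> incident ends i a.
Proof. by rewrite /incident; case/joinsP => ->; rewrite /= eqxx ?orbT. Qed.

Lemma joins_incidentr i a b : joins ends i a b -> incident ends i b.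
Proof. by rewrite joins_sym; apply: joins_incidentl. Qed.

Lemma incident_joins i x : incident ends i x -> exists y, joins ends i x y.
Proof.
rewrite /incident /joins; case: (ends i) => a b /= /orP [/eqP ->|/eqP ->].
  by exists b; rewrite eqxx.
by exists a; rewrite eqxx orbT.
Qed.

Lemma incident2_joins i x y : incident ends i x -> incident ends i y -> x != y ->
  joins ends i x y.
Proof.
rewrite /incident /joins; case: (ends i) => a b /=.
by case/orP=> /eqP <-; case/orP=> /eqP <-; rewrite ?eqxx //= ?orbT.
Qed.

Lemma joins_inj i i' x y : joins ends i x y -> joins ends i' x y -> i = i'.
Proof. by move=> H; case/joinsP=> E; apply: ends_simple.2; rewrite E // joins_sym. Qed.

Lemma joins_other i x y y' : joins ends i x y -> joins ends i x y' -> y = y'.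
Proof. by move=> /joinsP H /joinsP H'; case: H H' => -> [] [] *; subst. Qed.

Definition proper (c : 'I_m -> nat) : Prop :=
  forall i i' v, i != i' -> incident ends i v -> incident ends i' v ->
    c i != 0 -> c i != c i'.

Definition ncolored (c : 'I_m -> nat) : nat := #|[set i | c i != 0]|.

Definition edges_at_other (j : 'I_m) (v : T) : {set 'I_m} :=
  [set i | (i != j) && incident ends i v].

Lemma card_edges_at_other j v : incident ends j v ->
  #|edges_at_other j v| <= (maxdeg ends).-1.
Proof.
move=> Hj; have Hdeg : #|[set i | incident ends i v]| <= maxdeg ends.
  exact: (leq_bigmax (F := fun v => #|[set i | incident ends i v]|) v).
have -> : edges_at_other j v = [set i | incident ends i v] :\ j.
  by apply/setP => i; rewrite !inE.
by move: Hdeg; rewrite (cardsD1 j) inE Hj /=; set x := #|_|; lia.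
Qed.

(* Clause (2) of S' for [e_j = uv]: the edge [q = vy] closes a square [u x y v] whose edge
   [ux] has the colour of [q] and whose edge [xy] has colour [a]. *)
Definition square_witness (c : 'I_m -> nat) (j : 'I_m) (a : nat) (q : 'I_m) : bool :=
  [exists i, exists x, exists y, exists p, [&& c i == a, joins ends i x y,
     joins ends p (ends j).1 x, joins ends q (ends j).2 y & (c p != 0) && (c p == c q)]].

Lemma square_witness_uniq (c : 'I_m -> nat) j a a' q : proper c ->
  square_witness c j a q -> square_witness c j a' q -> a = a'.
Proof.
move=> Hp /existsP [i /existsP [x /existsP [y /existsP [p]]]].
move=> /and5P [/eqP <- Hi Hp1 Hq1 /andP [Hp0 /eqP Hpq]].
move=> /existsP [i' /existsP [x' /existsP [y' /existsP [p']]]].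
move=> /and5P [/eqP <- Hi' Hp1' Hq1' /andP [_ /eqP Hpq']].
have Ey : y = y' := joins_other Hq1 Hq1'; subst y'.
have Ep : p = p'.
  case: (eqVneq p p') => // Hne.
  have := Hp p p' _ Hne (joins_incidentl Hp1) (joins_incidentl Hp1') Hp0.
  by rewrite Hpq Hpq' eqxx.
subst p'; have Ex := joins_other Hp1 Hp1'; subst x'.
by rewrite (joins_inj Hi Hi').
Qed.

Section Forbidden.
Variables (c : 'I_m -> nat) (j : 'I_m).
Hypotheses (c_proper : proper c) (cj0 : c j = 0).

Local Notation U := (edges_at_other j (ends j).1).
Local Notation V := (edges_at_other j (ends j).2).

(* Charging each forbidden colour [a] to an edge at [u] or [v] other than [e_j], injectively:
   to an edge at [u] of colour [a] if there is one, otherwise to an edge at [v] that has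
   colour [a] or witnesses clause (2) for [a]. Hence |S'| <= 2 (Delta - 1). *)
Definition charged (a : nat) (e : 'I_m) : bool :=
  ((e \in U) && (c e == a)) ||
  [&& e \in V, (c e == a) || square_witness c j a e & [forall e' in U, c e' != a]].

Lemma square_witness_at_u a q : square_witness c j a q -> exists2 p, p \in U & c p = c q.
Proof.
move=> /existsP [i /existsP [x /existsP [y /existsP [p]]]].
move=> /and5P [_ _ Hp1 _ /andP [Hp0 /eqP Hpq]]; exists p => //.
rewrite inE (joins_incidentl Hp1) andbT.
by apply: contraNneq Hp0 => ->; rewrite cj0.
Qed.

Lemma charged_cofunctional a a' e : charged a e -> charged a' e -> a = a'.
Proof.
have UV e' : e' \in U -> e' \in V -> False.
  rewrite !inE => /andP [Hej Hu] /andP [_ Hv]; move/negP: Hej; apply; apply/eqP.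
  exact: ends_simple.2 (incident2_joins Hu Hv (ends_simple.1 j)).
case/orP=> [/andP [HU /eqP <-]|/and3P [HV Ha /forall_inP HnU]].
  by case/orP=> [/andP [_ /eqP]|/and3P [HV _ _]] //; case: (UV e).
case/orP=> [/andP [HU _]|/and3P [_ Ha' /forall_inP HnU']]; first by case: (UV e).
case/orP: Ha => [/eqP Ha|Ha]; case/orP: Ha' => [/eqP Ha'|Ha'].
- by rewrite -Ha -Ha'.
- by case: (square_witness_at_u Ha') => p /HnU; rewrite -Ha => /eqP.
- by case: (square_witness_at_u Ha) => p /HnU'; rewrite -Ha' => /eqP.
- exact: square_witness_uniq c_proper Ha Ha'.
Qed.

Lemma forbidden_charged a : forbidden ends c j a -> exists2 e, e \in U :|: V & charged a e.
Proof.
case: (boolP [exists e in U, c e == a]) => [/exists_inP [e HeU Hce]|/exists_inPn HnU].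
  by exists e; rewrite ?in_setU /charged HeU ?Hce.
have chargedV e : e \in V -> (c e == a) || square_witness c j a e ->
    exists2 e, e \in U :|: V & charged a e.
  move=> HeV Hq; exists e; first by rewrite in_setU HeV orbT.
  by apply/orP; right; rewrite HeV Hq; apply/forall_inP.
move=> /existsP [i /and4P [Hij Ha0 /eqP Hci /existsP [x /existsP [y /andP [Hixy]]]]].
case/or3P=> [/eqP Ex|/eqP Ex|/existsP [p /existsP [q /and4P [Hp1 Hq1 Hcp0 /eqP Hcpq]]]].
- by move: (HnU i); rewrite inE Hij -Ex (joins_incidentl Hixy) Hci eqxx => /(_ isT).
- by apply: (chargedV i); rewrite ?inE ?Hij -?Ex ?(joins_incidentl Hixy) ?Hci ?eqxx.
- apply: (chargedV q).
    rewrite inE (joins_incidentl Hq1) andbT.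
    by apply: contraNneq Hcp0 => Eq; rewrite Hcpq Eq cj0.
  apply/orP; right; apply/existsP; exists i; apply/existsP; exists x.
  apply/existsP; exists y; apply/existsP; exists p.
  by rewrite Hci eqxx Hixy Hp1 Hq1 Hcp0 Hcpq eqxx.
Qed.

Lemma count_forbidden K : count (forbidden ends c j) (iota 1 K) <= 2 * (maxdeg ends).-1.
Proof.
have charged_all : {in filter (forbidden ends c j) (iota 1 K),
    forall a, exists2 e, e \in U :|: V & charged a e}.
  by move=> a; rewrite mem_filter => /andP [/forbidden_charged].
rewrite -size_filter.
apply: leq_trans (size_le_card_cofunctional _ charged_all charged_cofunctional) _.
  exact/filter_uniq/iota_uniq.
apply: leq_trans (leq_card_setU U V) _.
have := card_edges_at_other (j := j) (v := (ends j).1).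
have := card_edges_at_other (j := j) (v := (ends j).2).
by rewrite /incident !eqxx orbT => /(_ isT) + /(_ isT); lia.
Qed.

End Forbidden.

Lemma palette_nth_allowed (R : archiRealFieldType) (gamma : R) (c : 'I_m -> nat) j f :
  (1 < gamma)%R -> proper c -> c j = 0 -> 1 <= f <= Fbound gamma (maxdeg ends) ->
  let a := nth 0 (palette ends (Kcol gamma (maxdeg ends)) c j) f.-1 in
  a != 0 /\ ~~ forbidden ends c j a.
Proof.
move=> Hg Hp Hcj Hf a.
set K := Kcol gamma (maxdeg ends).
have Hsize : size (palette ends K c j) = K - count (forbidden ends c j) (iota 1 K).
  have := count_predC (forbidden ends c j) (iota 1 K); rewrite size_iota size_filter.
  by set x := count (forbidden _ _ _) _; set y := count _ _; lia.
have Hlt : f.-1 < size (palette ends K c j).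
  have := Kcol_Fbound (maxdeg ends) Hg; have := count_forbidden Hp Hcj K.
  by rewrite Hsize -/K; set x := count _ _; lia.
have := mem_nth 0 Hlt; rewrite mem_filter mem_iota -/a => /andP [Hnf /andP [Ha _]].
by rewrite -lt0n.
Qed.

Definition recolor (c : 'I_m -> nat) (j : 'I_m) (a : nat) : 'I_m -> nat :=
  fun i => if i == j then a else c i.

Lemma forbidden_adjacent (c : 'I_m -> nat) j a i w : a != 0 -> i != j ->
  incident ends j w -> incident ends i w -> c i = a -> forbidden ends c j a.
Proof.
move=> Ha Hij Hjw Hiw Hci; apply/existsP; exists i; rewrite Hij Ha Hci eqxx /=.
case: (incident_joins Hiw) => y Hy.
apply/existsP; exists w; apply/existsP; exists y; rewrite Hy /=.
by case/orP: Hjw => /eqP ->; rewrite eqxx ?orbT.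
Qed.

Lemma proper_recolor (c : 'I_m -> nat) j a : proper c -> ~~ forbidden ends c j a -> a != 0 ->
  proper (recolor c j a).
Proof.
move=> Hp Hnf Ha i i' w Hne Hi Hi'; rewrite /recolor.
have allowed k : k != j -> incident ends j w -> incident ends k w -> c k != a.
  by move=> Hk Hj Hkw; apply: contraNneq Hnf => /(forbidden_adjacent Ha Hk Hj Hkw).
have [Eij|Nij] := eqVneq i j; have [Ei'j|Ni'j] := eqVneq i' j.
- by rewrite Eij Ei'j eqxx in Hne.
- by move=> _; rewrite eq_sym allowed // -Eij.
- by move=> _; rewrite allowed // -Ei'j.
- exact: Hp Hne Hi Hi'.
Qed.

Lemma ncolored_recolor (c : 'I_m -> nat) j a : c j = 0 -> a != 0 ->
  ncolored (recolor c j a) = (ncolored c).+1.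
Proof.
move=> Hcj Ha; rewrite /ncolored.
have -> : [set i | recolor c j a i != 0] = j |: [set i | c i != 0].
  by apply/setP => i; rewrite !inE /recolor; case: (eqVneq i j) => [->|] //=; rewrite Ha.
by rewrite cardsU1 inE Hcj.
Qed.

Definition uncolor_cycle (c : 'I_m -> nat) (cs : seq 'I_m) (j : 'I_m) : 'I_m -> nat :=
  fun i => if [&& i \in cs, i != nth j cs 1 & i != nth j cs 2] then 0 else c i.

Lemma proper_uncolor_cycle (c : 'I_m -> nat) (cs : seq 'I_m) j :
  proper c -> proper (uncolor_cycle c cs j).
Proof.
move=> Hp i i' w Hne Hi Hi'; rewrite /uncolor_cycle; case: ifP => // _ H0.
by case: ifP => _; [| exact: Hp Hne Hi Hi' H0].
Qed.

Lemma ncolored_uncolor_cycle (c : 'I_m -> nat) (cs : seq 'I_m) j :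
  uniq cs -> 3 <= size cs -> all (fun i => c i != 0) cs ->
  ncolored (uncolor_cycle c cs j) + (size cs - 2) = ncolored c.
Proof.
move=> Hu H3 Hall; rewrite /ncolored.
set e1 := nth j cs 1; set e2 := nth j cs 2.
have He12 : [set e1; e2] \subset [set i in cs].
  apply/subsetP => i; rewrite !inE => /orP [] /eqP ->; exact/mem_nth/(leq_trans _ H3).
have Hcs : [set i in cs] :\: [set e1; e2] \subset [set i | c i != 0].
  by apply/subsetP => i; rewrite !inE => /andP [_ /(allP Hall)].
have -> : [set i | uncolor_cycle c cs j i != 0] =
    [set i | c i != 0] :\: ([set i in cs] :\: [set e1; e2]).
  apply/setP => i; rewrite !inE /uncolor_cycle -/e1 -/e2.
  by case: (i \in cs); case: (i =P e1); case: (i =P e2).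
have Hne : e1 != e2 by rewrite nth_uniq ?(leq_trans _ H3).
have Hcard : #|[set i in cs] :\: [set e1; e2]| = size cs - 2.
  by rewrite cardsDS // cards2 Hne cardsE (card_uniqP Hu).
by rewrite cardsDS // Hcard; have := subset_leq_card Hcs; rewrite Hcard; lia.
Qed.

Lemma proper_cycle_adj (c : 'I_m -> nat) (d : 'I_m) (cs : seq 'I_m) i :
  proper c -> is_cycle ends cs -> all (fun i => c i != 0) cs -> i < size cs ->
  c (nth d cs i) != c (nth d cs (i.+1 %% size cs)).
Proof.
move=> Hp [H3 [Hu [vs [_ [_ Hjoin]]]]] Hall Hi.
have Hi' : i.+1 %% size cs < size cs by rewrite ltn_pmod //; lia.
have Hne : nth d cs i != nth d cs (i.+1 %% size cs).
  rewrite nth_uniq //; case: (ltnP i.+1 (size cs)) => H.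
    by rewrite modn_small //; lia.
  by rewrite (_ : i.+1 = size cs) ?modnn; lia.
pose dv := (ends d).1.
apply: (Hp _ _ (nth dv vs (i.+1 %% size cs)) Hne).
- exact: joins_incidentr (Hjoin d dv i Hi).
- exact: joins_incidentl (Hjoin d dv _ Hi').
- exact: (allP Hall) _ (mem_nth d Hi).
Qed.

Lemma two_valued_eq (X : eqType) (s : seq X) x y z : x \in s -> y \in s -> z \in s ->
  size (undup s) <= 2 -> x != y -> y != z -> x = z.
Proof.
move=> Hx Hy Hz Hs2 Hxy Hyz; apply/eqP; apply: contraTT Hs2 => Hxz.
have Hsub : {subset [:: x; y; z] <= undup s}.
  by move=> w; rewrite !inE mem_undup => /or3P [] /eqP ->.
rewrite -ltnNge; apply: leq_trans (uniq_leq_size _ Hsub) => //=.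
by rewrite !inE negb_or Hxy Hxz Hyz.
Qed.

Section BichromaticCycle.
Variables (c : 'I_m -> nat) (d : 'I_m) (cs : seq 'I_m).
Hypotheses (c_proper : proper c) (cs_cycle : is_cycle ends cs).
Hypotheses (cs_colored : all (fun i => c i != 0) cs) (cs_two : size (undup (map c cs)) <= 2).

Lemma bichromatic_cycle_alternates i : i < size cs ->
  (c (nth d cs i) == c (nth d cs 0)) = ~~ odd i.
Proof.
have H3 : 3 <= size cs by case: cs_cycle.
have Hmem k : k < size cs -> c (nth d cs k) \in map c cs by move=> Hk; exact/map_f/mem_nth.
elim: i => [|i IH] Hi; first by rewrite eqxx.
have Hadj := proper_cycle_adj d c_proper cs_cycle cs_colored (ltnW Hi).
rewrite modn_small // in Hadj.
rewrite /= negbK -[odd i]negbK -(IH (ltnW Hi)); case: eqP => [E|/eqP Ne].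
  by rewrite -E (negbTE Hadj).
by rewrite (two_valued_eq (Hmem _ (ltnW Hi)) (Hmem _ Hi) (Hmem 0 _) cs_two) ?eqxx //; lia.
Qed.

Lemma bichromatic_cycle_parity i i' : i < size cs -> i' < size cs ->
  (c (nth d cs i) == c (nth d cs i')) = ~~ odd (i + i').
Proof.
move=> Hi Hi'; have := bichromatic_cycle_alternates Hi.
have := bichromatic_cycle_alternates Hi'.
have Hmem k : k < size cs -> c (nth d cs k) \in map c cs by move=> Hk; exact/map_f/mem_nth.
have Hlt0 : 0 < size cs by apply: leq_ltn_trans Hi.
rewrite oddD; case: (odd i) (odd i') => [] [] /= /eqP Ei' /eqP Ei.
- apply/eqP/(two_valued_eq (Hmem _ Hi) (Hmem 0 Hlt0) (Hmem _ Hi') cs_two).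
    exact/eqP.
  by apply/eqP => /esym.
- by rewrite Ei'; apply/negbTE/eqP.
- by rewrite Ei eq_sym; apply/negbTE/eqP.
- by rewrite Ei Ei' eqxx.
Qed.

Lemma bichromatic_cycle_even : ~~ odd (size cs).
Proof.
have H3 : 3 <= size cs by case: cs_cycle.
have Hl : (size cs).-1 < size cs by lia.
have := proper_cycle_adj d c_proper cs_cycle cs_colored Hl.
rewrite prednK ?modnn; last lia.
rewrite (bichromatic_cycle_alternates Hl) negbK.
by case: (size cs) H3 => // n _; rewrite /= negbK.
Qed.

End BichromaticCycle.

(* A two-coloured square through [e_j] would make its new colour [a] forbidden by
   clause (2). *)
Lemma bichromatic_cycle_not_square (c : 'I_m -> nat) j a cs : proper c ->
  ~~ forbidden ends c j a -> a != 0 -> bicycle ends (recolor c j a) j cs -> size cs != 4.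
Proof.
move=> Hp Hnf Ha [[Hcyc [Hhead _]] [Hall H2]]; apply/eqP => H4.
have par := bichromatic_cycle_parity j (proper_recolor Hp Hnf Ha) Hcyc Hall H2.
case: Hcyc par {H2} => _ [Hu [vs [Hvs [_ Hjoin]]]].
case: cs H4 Hhead Hall Hu Hjoin Hvs => [|x [|e1 [|e2 [|e3 [|]]]]] //= _ -> Hall Hu Hjoin.
case: vs Hjoin => [|v0 [|v1 [|v2 [|v3 [|]]]]] //= Hjoin _ par.
have J0 := Hjoin j v0 0 isT; have J1 := Hjoin j v0 1 isT.
have J2 := Hjoin j v0 2 isT; have J3 := Hjoin j v0 3 isT; rewrite /= in J0 J1 J2 J3.
move: Hu; rewrite !inE !negb_or => /and4P [/and3P [Nj1 Nj2 Nj3] _ _ _].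
have Hce i : i != j -> recolor c j a i = c i by rewrite /recolor => /negbTE ->.
have Hc2 : c e2 = a.
  by have := par 2 0 isT isT; rewrite /= Hce 1?eq_sym // /recolor eqxx => /eqP.
have Hc13 : c e1 = c e3.
  by have := par 1 3 isT isT; rewrite /= !Hce 1?eq_sym // => /eqP.
have Hc1 : c e1 != 0 by move: Hall => /and4P [_ + _ _]; rewrite Hce // eq_sym.
move/negP: Hnf; apply; apply/existsP; exists e2; rewrite eq_sym Nj2 Ha Hc2 eqxx /=.
case/joinsP: J0 => ->.
- apply/existsP; exists v3; apply/existsP; exists v2; rewrite joins_sym J2 /=.
  apply/orP; right; apply/orP; right; apply/existsP; exists e3; apply/existsP; exists e1.
  by rewrite joins_sym J3 J1 Hc13 eqxx -Hc13 Hc1.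
- apply/existsP; exists v2; apply/existsP; exists v3; rewrite J2 /=.
  apply/orP; right; apply/orP; right; apply/existsP; exists e1; apply/existsP; exists e3.
  by rewrite J1 joins_sym J3 Hc13 eqxx -Hc13 Hc1.
Qed.

Lemma exists_first_uncolored (c : 'I_m -> nat) i0 : c i0 = 0 ->
  exists j : 'I_m, (c j == 0) && [forall i : 'I_m, (i < j) ==> (c i != 0)].
Proof.
move/eqP=> Hi0; case: (arg_minnP (P := fun i => c i == 0) val Hi0) => j Hj Hmin.
exists j; rewrite Hj; apply/forall_inP => i Hij; apply: contraTN Hij => /Hmin.
by rewrite -leqNgt.
Qed.

Section Procedure.
Variables (rule : ('I_m -> nat) -> 'I_m -> option (seq 'I_m))
  (enumc : 'I_m -> nat -> seq (seq 'I_m)).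
Hypothesis rule_ok : rule_spec ends rule.
Variables (R : archiRealFieldType) (gamma : R).
Hypothesis gamma_gt1 : (1 < gamma)%R.

Local Notation K := (Kcol gamma (maxdeg ends)).
Local Notation Fb := (Fbound gamma (maxdeg ends)).
Local Notation run := (run_from ends rule enumc K).

Definition cycle_record (r : option (nat * nat)) : Prop :=
  if r is Some (k, _) then 3 <= k /\ exists cs, is_cycle ends cs /\ size cs = 2 * k
  else True.

Lemma step_spec c f c' r : proper c -> (exists i, c i = 0) -> 1 <= f <= Fb ->
  step ends rule enumc K c f = (c', r) ->
  [/\ proper c', record_ones r + ncolored c' = (ncolored c).+1 & cycle_record r].
Proof.
move=> Hp [i0 Hi0] Hf; rewrite /step.
case: pickP => [j /andP [/eqP Hcj _]|Hnone]; last first.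
  by case: (exists_first_uncolored Hi0) => j; rewrite Hnone.
have [Ha Hnf] := palette_nth_allowed gamma_gt1 Hp Hcj Hf.
set a := nth _ _ _ in Ha Hnf *; rewrite -/(recolor c j a).
have Hp1 := proper_recolor Hp Hnf Ha.
have Hn1 := ncolored_recolor Hcj Ha.
case Hr: (rule _ j) => [cs|] [<- <-] //.
have Hb := rule_ok (recolor c j a) j; rewrite Hr in Hb.
have Hsq := bichromatic_cycle_not_square Hp Hnf Ha Hb.
case: Hb => [[Hcyc _] [Hall H2]].
have Heven := bichromatic_cycle_even j Hp1 Hcyc Hall H2.
have H3 : 3 <= size cs by case: Hcyc.
have Hsize : 2 * (size cs)./2 = size cs by rewrite mul2n even_halfK.
split; first exact: proper_uncolor_cycle.
- rewrite /= Hsize -Hn1 -(ncolored_uncolor_cycle j _ H3 Hall) 1?addnC //.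
  by case: Hcyc => _ [].
- by split; [move/eqP: Hsq; lia | exists cs].
Qed.

Lemma run_from_colored c F : (forall i, c i != 0) -> (run c F).1 = c.
Proof.
move=> Hfull; elim: F => //= f F IH.
suff -> : (step ends rule enumc K c f).1 = c by [].
rewrite /step; case: pickP => [j /andP [/eqP Hj _]|//].
by have := Hfull j; rewrite Hj.
Qed.

Lemma run_from_uncolored c F : (exists i, (run c F).1 i = 0) -> exists i, c i = 0.
Proof.
case: (boolP [forall i, c i != 0]) => [/forallP /run_from_colored -> //|].
by rewrite negb_forall => /existsP [i /negPn /eqP]; exists i.
Qed.

Lemma run_from_spec c F : proper c -> all (fun f => 1 <= f <= Fb) F ->
  (exists i, (run c F).1 i = 0) ->
  let ones := map record_ones (run c F).2 in
  [/\ sumn ones + ncolored (run c F).1 = size F + ncolored c,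
      forall k, sumn (take k ones) <= k + ncolored c &
      forall r, r \in (run c F).2 -> cycle_record r].
Proof.
elim: F c => [|f F IH] c Hp /=; first by split => // k; rewrite take_oversize.
move=> /andP [Hf HF] Hunc; have Hc0 := run_from_uncolored (F := f :: F) Hunc.
case Hs: (step ends rule enumc K c f) => [c' r] /=; rewrite Hs /= in Hunc.
have [Hp' Hcount Hrec] := step_spec Hp Hc0 Hf Hs.
have [IHcount IHprefix IHrec] := IH c' Hp' HF Hunc.
split.
- by rewrite -addnA IHcount; lia.
- by case=> [|k] //=; have := IHprefix k; lia.
- by move=> r'; rewrite inE => /orP [/eqP ->|]; [exact: Hrec | exact: IHrec].
Qed.

End Procedure.
End Graph.

Lemma size_run_from (T : finType) (m : nat) (ends : 'I_m -> T * T) rule enumc K c F :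
  size (run_from ends rule enumc K c F).2 = size F.
Proof. by elim: F c => [|f F IH] c //=; rewrite IH. Qed.

Theorem lemma4 (T : finType) (m : nat) (ends : 'I_m -> T * T)
  (Hsimple : simple_graph ends)
  (rule : ('I_m -> nat) -> 'I_m -> option (seq 'I_m)) (Hpick : rule_spec ends rule)
  (enumc : 'I_m -> nat -> seq (seq 'I_m)) (Henum : enum_spec ends enumc)
  (R : archiRealFieldType) (gamma : R) (Hgamma : (1 < gamma)%R)
  (t : nat) (Ht : (0 < t)%N) (F : seq nat) (HFsize : size F = t)
  (HFrange : all (fun f => (1 <= f <= Fbound gamma (maxdeg ends))%N) F)
  (Hunc : exists i, (procedure ends rule enumc (Kcol gamma (maxdeg ends)) F).1 i = 0%N) :
  let res := procedure ends rule enumc (Kcol gamma (maxdeg ends)) F in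
  let w := Rcirc res.2 in
  let r := #|[set i | res.1 i != 0%N]| in
  [/\ partial_dyck w,
      count_mem 0%N w = t,
      (count_mem 1%N w + r)%N = t,
      (forall a b, descent w a b -> ~~ odd (b - a))
    & (forall l : nat, (1 <= l)%N ->
        (forall cs, is_cycle ends cs -> (2 * l + 1 <= size cs)%N) ->
        forall a b, descent w a b -> (maxn 4 (2 * l) <= b - a)%N)].
Proof.
move=> res w r.
have Hp0 : proper ends (fun _ => 0) by move=> i i' v _ _ _; rewrite eqxx.
have Hn0 : ncolored (fun _ : 'I_m => 0) = 0.
  by apply/eqP; rewrite cards_eq0; apply/eqP/setP => i; rewrite !inE eqxx.
have [Hcount Hprefix Hrec] := run_from_spec Hsimple Hpick Hgamma Hp0 HFrange Hunc.
rewrite Hn0 addn0 in Hcount Hprefix.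
have descent_cycle a b : descent w a b -> exists k, [/\ b - a = 2 * k - 2, 3 <= k &
    exists cs, is_cycle ends cs /\ size cs = 2 * k].
  by case/descent_Rcirc => -[k l] /Hrec [Hk Hcs] ->; exists k.
split.
- split; first by rewrite /w Rcirc_block_word all01_block_word.
  by move=> n; rewrite /w Rcirc_block_word -[X in _ <= X]addn0; exact: block_word_prefix.
- by rewrite /w Rcirc_block_word count0_block_word size_map size_run_from.
- by rewrite /w Rcirc_block_word count1_block_word -HFsize.
- move=> a b /descent_cycle [k [-> Hk _]].
  by rewrite (_ : 2 * k - 2 = 2 * (k - 1)) ?oddM //; lia.
- move=> l Hl Hgirth a b /descent_cycle [k [-> Hk [cs [Hcs Hsz]]]].
  by have := Hgirth cs Hcs; rewrite Hsz; lia.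
Qed.
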